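(* Let $n\ge 3$ be an integer and $\mathbf a=(a_0,\dots,a_n)\in\mathbb{Z}_3^{n+1}$ with $\prod_i a_i\neq 0$. (1) Suppose $n=3$. Then $X_{\mathbf a}$ has a $\mathbb{Q}_3$-rational point if and only if one of the following holds: (i) $v_3(\mathbf a)\sim(0,0,0,0)$, $(0,0,0,1)$, $(0,0,1,1)$ or $(0,0,1,2)$; (ii) $v_3(\mathbf a)\sim(0,0,0,2)$ and, normalizing so that $v_3(\mathbf a)=(0,0,0,2)$ (that is, for $\mathbf b=(b_0,\dots,b_3)$ with $\mathbf b\simeq\mathbf a$ and $v_3(\mathbf b)=(0,0,0,2)$), the set of residue classes modulo $9$ of $\pm b_0,\pm b_1,\pm b_2$ is not equal to the set of classes of $\pm1,\pm2,\pm4$. (2) Suppose $n\ge 4$. Then $X_{\mathbf a}$ has a $\mathbb{Q}_3$-rational point.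
   Context: $X_{\mathbf a}\subset\mathbb{P}^n_{\mathbb{Q}_3}$ is the diagonal cubic $\sum_{i=0}^na_ix_i^3=0$. $v_3$ is the $3$-adic valuation, applied componentwise: $v_3(\mathbf a)=(v_3(a_0),\dots,v_3(a_n))\in\mathbb{Z}^{n+1}$. For $\mathbf a,\mathbf b\in(\mathbb{Q}_3^\times)^{n+1}$ write $\mathbf a\simeq\mathbf b$ if there exist $\alpha,\alpha_0,\dots,\alpha_n\in\mathbb{Q}_3^\times$ and a permutation $\sigma$ of $\{0,\dots,n\}$ with $a_i=\alpha\,b_{\sigma(i)}\alpha_i^3$ for all $i$. The relation $\sim$ on $\mathbb{Z}^{n+1}$ is the one induced by $\simeq$ via $v_3$: $e\sim f$ iff $e=v_3(\mathbf a)$, $f=v_3(\mathbf b)$ for some $\mathbf a\simeq\mathbf b$ (equivalently, $f$ is obtained from $e$ by a permutation of coordinates, adding the same integer to all coordinates, and adding multiples of $3$ to individual coordinates). *)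

(* 3-adic integers Z_3 are modelled as the inverse limit
   lim Z/3^k Z: a 3-adic integer is a sequence x : nat -> int of
   representatives with x (k+1) = x k (mod 3^k); two such sequences are equal
   when they agree mod 3^k at every level k.  Q_3 = Z_3[1/3] is modelled by
   pairs (x, k) standing for x / 3^k. *)
From mathcomp Require Import all_boot all_order all_fingroup all_algebra.
Set Implicit Arguments. Unset Strict Implicit. Unset Printing Implicit Defensive.
Import Order.TTheory GRing.Theory Num.Theory.
Local Open Scope ring_scope.

Definition pow3 (k : nat) : int := ((3 ^ k)%N)%:Z.

Definition Z3 := (nat -> int).
Definition is_Z3 (x : Z3) : Prop :=
  forall k : nat, (x k.+1 == x k %[mod pow3 k])%Z.
Definition eqZ3 (x y : Z3) : Prop :=
  forall k : nat, (x k == y k %[mod pow3 k])%Z.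
Definition Z3zero : Z3 := fun _ => 0.
Definition Z3mul (x y : Z3) : Z3 := fun k => x k * y k.

Definition valZ3 (x : Z3) (m : nat) : Prop :=
  (pow3 m %| x m)%Z /\ ~~ (pow3 m.+1 %| x m.+1)%Z.

Definition Q3 := (Z3 * nat)%type.
Definition is_Q3 (p : Q3) : Prop := is_Z3 p.1.
Definition Q3eq (p q : Q3) : Prop :=
  eqZ3 (fun k => p.1 k * pow3 q.2) (fun k => q.1 k * pow3 p.2).
Definition Q3zero : Q3 := (Z3zero, 0%N).
Definition Q3ofZ3 (x : Z3) : Q3 := (x, 0%N).
Definition Q3add (p q : Q3) : Q3 :=
  (fun k => p.1 k * pow3 q.2 + q.1 k * pow3 p.2, (p.2 + q.2)%N).
Definition Q3mul (p q : Q3) : Q3 := (Z3mul p.1 q.1, (p.2 + q.2)%N).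
Definition Q3cube (p : Q3) : Q3 := Q3mul p (Q3mul p p).

Definition has_Q3_point (n : nat) (a : 'I_n.+1 -> Z3) : Prop :=
  exists x : 'I_n.+1 -> Q3,
    (forall i, is_Q3 (x i)) /\ (exists i, ~ Q3eq (x i) Q3zero) /\
    Q3eq (\big[Q3add/Q3zero]_(i < n.+1) Q3mul (Q3ofZ3 (a i)) (Q3cube (x i)))
         Q3zero.

Definition simeq (n : nat) (a b : 'I_n.+1 -> Z3) : Prop :=
  exists (al : Q3) (als : 'I_n.+1 -> Q3) (s : 'S_(n.+1)),
    is_Q3 al /\ ~ Q3eq al Q3zero /\
    (forall i, is_Q3 (als i) /\ ~ Q3eq (als i) Q3zero) /\
    forall i, Q3eq (Q3ofZ3 (a i))
                   (Q3mul (Q3mul al (Q3ofZ3 (b (s i)))) (Q3cube (als i))).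

Definition simv (n : nat) (e f : 'I_n.+1 -> int) : Prop :=
  exists (s : 'S_(n.+1)) (c : int) (m : 'I_n.+1 -> int),
    forall i, f i = e (s i) + c + 3 * m i.

Definition val_vec (n : nat) (a : 'I_n.+1 -> Z3) (e : 'I_n.+1 -> nat) : Prop :=
  forall i, valZ3 (a i) (e i).

Definition vec4 (l : seq nat) : 'I_4 -> nat := fun i => nth 0%N l i.

Definition val_sim4 (a : 'I_4 -> Z3) (l : seq nat) : Prop :=
  exists e : 'I_4 -> nat, val_vec a e /\ simv (fun i => (e i)%:Z) (fun i => (vec4 l i)%:Z).

Definition residues_full (b : 'I_4 -> Z3) : Prop :=
  forall r : int,
    (exists i : 'I_4, (i < 3)%N /\
        ((r == b i 2%N %[mod 9])%Z \/ (r == - b i 2%N %[mod 9])%Z)) <->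
    (exists t : int, t \in [:: 1; 2; 4; -1; -2; -4] /\ (r == t %[mod 9])%Z).

(* A zero over Q_3 scales to a zero over Z_3, and the rescalings of the relation ~= transport
   zeros, so the valuations of the coefficients can be normalized into {0, 1, 2}.  For a unit c,
   c Y^3 = d has a 3-adic unit solution as soon as it has one mod 9 (Hensel: the derivative
   3 c y^2 has valuation exactly 1), hence a zero mod 9 with coordinates in {0, 1, -1} that is
   nonzero at a unit coefficient lifts to a 3-adic zero.  A finite search mod 9 finds such a
   zero whenever the valuations contain the pattern (0, 0, 1) or (0, 0, 0, 0) up to a common
   shift mod 3; this happens for any five coefficients and for the first four classes when
   n = 3.  In the class (0, 0, 0, 2) it exists iff the residues of +-b_0, +-b_1, +-b_2 mod 9
   miss one of +-1, +-2, +-4; otherwise a descent shows that every zero is divisible by all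
   powers of 3. *)

From mathcomp Require Import all_boot all_order all_fingroup all_algebra.
From mathcomp Require Import ring zify.
From Stdlib Require Import Classical.
Set Implicit Arguments. Unset Strict Implicit. Unset Printing Implicit Defensive.
Import Order.TTheory GRing.Theory Num.Theory.
Local Open Scope ring_scope.

(** * Congruences and powers of 3 *)

Section IntCongruence.
Implicit Types d m n p q : int.

Lemma eqz_modP d m n : (m = n %[mod d])%Z <-> (d %| m - n)%Z.
Proof. by rewrite -eqz_mod_dvd; split=> /eqP. Qed.

Lemma dvdz_modP d m : (d %| m)%Z <-> (m = 0 %[mod d])%Z.
Proof. by rewrite eqz_modP subr0. Qed.

Lemma eqz_modD d m n p q :
  (m = n %[mod d] -> p = q %[mod d] -> m + p = n + q %[mod d])%Z.
Proof. by move=> h1 h2; rewrite -modzDm h1 h2 modzDm. Qed.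

Lemma eqz_modN d m n : (m = n %[mod d] -> - m = - n %[mod d])%Z.
Proof. by move=> h; rewrite -modzNm h modzNm. Qed.

Lemma eqz_modM d m n p q :
  (m = n %[mod d] -> p = q %[mod d] -> m * p = n * q %[mod d])%Z.
Proof. by move=> h1 h2; rewrite -modzMm h1 h2 modzMm. Qed.

Lemma eqz_modX d m n k : (m = n %[mod d] -> m ^+ k = n ^+ k %[mod d])%Z.
Proof. by move=> h; rewrite -modzXm h modzXm. Qed.

Lemma eqz_mod_sum d (I : finType) (P : pred I) (F G : I -> int) :
  (forall i, P i -> F i = G i %[mod d])%Z ->
  (\sum_(i | P i) F i = \sum_(i | P i) G i %[mod d])%Z.
Proof. by move=> h; elim/big_rec2: _ => // i x y /h; apply: eqz_modD. Qed.

Lemma eqz_mod_dvdl d d' m n : (d' %| d)%Z -> (m = n %[mod d] -> m = n %[mod d'])%Z.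
Proof. by move=> hd /eqz_modP h; apply/eqz_modP/(dvdz_trans hd). Qed.

Lemma eqz_mod_dvdz d m n : (m = n %[mod d])%Z -> (d %| m)%Z = (d %| n)%Z.
Proof. by move=> h; apply/dvdz_mod0P/dvdz_mod0P; rewrite h. Qed.

End IntCongruence.

Lemma pow3E k : pow3 k = 3 ^+ k.
Proof. by rewrite /pow3 -natz natrX. Qed.

Lemma pow3D k l : pow3 (k + l) = pow3 k * pow3 l.
Proof. by rewrite !pow3E exprD. Qed.

Lemma pow3_0 : pow3 0 = 1.
Proof. by []. Qed.

Lemma pow3_1 : pow3 1 = 3.
Proof. by []. Qed.

Lemma pow3S k : pow3 k.+1 = 3 * pow3 k.
Proof. by rewrite !pow3E exprS. Qed.

Lemma pow3_3M k : pow3 (3 * k) = pow3 k ^+ 3.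
Proof. by rewrite !pow3E -exprM mulnC. Qed.

Lemma dvdz_pow3 k l : (k <= l)%N -> (pow3 k %| pow3 l)%Z.
Proof. by rewrite !pow3E; apply: dvdz_exp2l. Qed.

Lemma pow3_neq0 k : pow3 k != 0.
Proof. by rewrite pow3E expf_neq0. Qed.

Definition unit3 (u : int) : bool := ~~ (3 %| u)%Z.

Lemma coprimez_pow3 k (u : int) : unit3 u -> coprimez (pow3 k) u.
Proof.
by move=> u_unit; rewrite pow3E coprimezXl // coprimezE prime_coprime // -dvdzE.
Qed.

Lemma unit3M (u w : int) : unit3 u -> unit3 w -> unit3 (u * w).
Proof. by move=> u_unit w_unit; rewrite /unit3 Gauss_dvdzr // (coprimez_pow3 1). Qed.

Lemma unit3X (u : int) k : unit3 u -> unit3 (u ^+ k).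
Proof. by move=> u_unit; elim: k => [|k ih]; rewrite ?expr0 ?exprS ?unit3M. Qed.

Lemma unit3_mod (u w : int) : (u = w %[mod 3])%Z -> unit3 u = unit3 w.
Proof. by move=> uw; rewrite /unit3 (eqz_mod_dvdz uw). Qed.

Lemma dvdz_pow3_unitl k (u w : int) : unit3 u -> (pow3 k %| u * w)%Z = (pow3 k %| w)%Z.
Proof. by move=> u_unit; rewrite Gauss_dvdzr // coprimez_pow3. Qed.

Lemma int_mod3_cases (u : int) : exists q, [\/ u = 3 * q, u = 3 * q + 1 | u = 3 * q - 1].
Proof.
exists ((u + 1) %/ 3)%Z.
have := divz_eq (u + 1) 3; have := ltz_pmod (u + 1) (isT : (0 : int) < 3).
have := modz_ge0 (u + 1) (isT : (3 : int) != 0).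
set q := ((u + 1) %/ 3)%Z; set r := ((u + 1) %% 3)%Z => r_ge0 r_lt3 def_u.
have : u = 3 * q \/ u = 3 * q + 1 \/ u = 3 * q - 1 by lia.
by case=> [|[]] ->; [constructor 1|constructor 2|constructor 3].
Qed.

Lemma unit3_sqr (u : int) : unit3 u -> (u ^+ 2 = 1 %[mod 3])%Z.
Proof.
have [q [] ->] := int_mod3_cases u; rewrite /unit3.
- by rewrite dvdz_mulr.
- by move=> _; apply/eqz_modP/dvdzP; exists (3 * q ^+ 2 + 2 * q); ring.
- by move=> _; apply/eqz_modP/dvdzP; exists (3 * q ^+ 2 - 2 * q); ring.
Qed.

Definition signs : seq int := [:: 0; 1; -1].

Lemma sign_cube (s : int) : s \in signs -> s ^+ 3 = s.
Proof. by rewrite !inE => /or3P [] /eqP ->. Qed.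

Lemma cube_mod9 (y : int) :
  exists2 s, s \in signs & (y ^+ 3 = s %[mod 9])%Z /\ (s == 0) = ~~ unit3 y.
Proof.
have [q [] ->] := int_mod3_cases y; rewrite /unit3.
- exists 0 => //; rewrite dvdz_mulr //; split=> //.
  by apply/eqz_modP/dvdzP; exists (3 * q ^+ 3); ring.
- exists 1 => //; split; last by rewrite mulrC (eqz_mod_dvdz (modzMDl _ _ _)).
  by apply/eqz_modP/dvdzP; exists (3 * q ^+ 3 + 3 * q ^+ 2 + q); ring.
- exists (-1) => //; split; last by rewrite mulrC (eqz_mod_dvdz (modzMDl _ _ _)).
  by apply/eqz_modP/dvdzP; exists (3 * q ^+ 3 - 3 * q ^+ 2 + q); ring.
Qed.

(** * 3-adic integers *)

Lemma is_Z3P x : is_Z3 x <-> forall k, (x k.+1 = x k %[mod pow3 k])%Z.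
Proof. by split=> h k; apply/eqP/h. Qed.

Lemma Z3_mod x k l : is_Z3 x -> (k <= l)%N -> (x l = x k %[mod pow3 k])%Z.
Proof.
move=> /is_Z3P x_Z3 /subnK <-; elim: (l - k)%N => // i ih.
by rewrite addSn (eqz_mod_dvdl _ (x_Z3 _)) ?dvdz_pow3 ?leq_addl.
Qed.

Lemma is_Z3_const c : is_Z3 (fun=> c).
Proof. by []. Qed.

Lemma is_Z3M x y : is_Z3 x -> is_Z3 y -> is_Z3 (Z3mul x y).
Proof. by move=> /is_Z3P x_Z3 /is_Z3P y_Z3; apply/is_Z3P => k; apply: eqz_modM. Qed.

Lemma eqZ3_0P y : eqZ3 y Z3zero <-> forall k, (pow3 k %| y k)%Z.
Proof. by split=> h k; move: (h k); rewrite eqz_mod_dvd subr0. Qed.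

Lemma val_exists x : ~ eqZ3 x Z3zero -> exists v, valZ3 x v.
Proof.
move=> /eqZ3_0P x_neq0.
have [k x_ndvd] : exists k, ~~ (pow3 k %| x k)%Z.
  by apply: NNPP => h; apply: x_neq0 => k; apply: NNPP => hk; apply: h; exists k; apply/negP.
have ex_k : exists k, ~~ (pow3 k %| x k)%Z by exists k.
case: (ex_minnP ex_k) => -[|v]; first by rewrite dvd1z.
by move=> x_ndvd' x_min; exists v; split=> //; apply: contraT => /x_min; rewrite ltnn.
Qed.

Lemma val_dvd x v k : is_Z3 x -> valZ3 x v -> (v <= k)%N -> (pow3 v %| x k)%Z.
Proof. by move=> x_Z3 [x_dvd _] le_vk; rewrite (eqz_mod_dvdz (Z3_mod x_Z3 le_vk)). Qed.

Lemma val_unit x v k : is_Z3 x -> valZ3 x v -> (v < k)%N ->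
  exists2 u, x k = pow3 v * u & unit3 u.
Proof.
move=> x_Z3 x_val lt_vk; have xk := val_dvd x_Z3 x_val (ltnW lt_vk).
exists (x k %/ pow3 v)%Z; first by rewrite mulrC divzK.
apply: contraNN x_val.2 => /(dvdz_mul (dvdzz (pow3 v))).
rewrite (mulrC (pow3 v) (_ %/ _)%Z) divzK // mulrC -pow3S.
by rewrite (eqz_mod_dvdz (Z3_mod x_Z3 lt_vk)).
Qed.

Lemma val_unit3 x : valZ3 x 0 <-> unit3 (x 1%N).
Proof. by rewrite /valZ3 /pow3 expn0 dvd1z; split=> [[]|]. Qed.

Lemma eqZ3_mul0l p x : is_Z3 p -> is_Z3 x -> ~ eqZ3 p Z3zero ->
  eqZ3 (Z3mul p x) Z3zero -> eqZ3 x Z3zero.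
Proof.
move=> p_Z3 x_Z3 /val_exists[v p_val] /eqZ3_0P px0; apply/eqZ3_0P => k.
have [u pE u_unit] := val_unit p_Z3 p_val (leq_addl k v.+1).
have e : pow3 (k + v.+1) = pow3 v * pow3 k.+1 by rewrite -pow3D; congr pow3; lia.
move: (px0 (k + v.+1)%N); rewrite /Z3mul pE e -mulrA dvdz_mul2l ?pow3_neq0 //.
rewrite dvdz_pow3_unitl // -(eqz_mod_dvdz (Z3_mod x_Z3 (leq_addr v.+1 k))).
exact: dvdz_trans (dvdz_pow3 (leqnSn k)).
Qed.

Lemma Z3mul_neq0 x y : is_Z3 x -> is_Z3 y -> ~ eqZ3 x Z3zero -> ~ eqZ3 y Z3zero ->
  ~ eqZ3 (Z3mul x y) Z3zero.
Proof. by move=> x_Z3 y_Z3 x_neq0 y_neq0 /(eqZ3_mul0l x_Z3 y_Z3 x_neq0). Qed.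

Lemma pow3_Z3_neq0 c : ~ eqZ3 (fun=> pow3 c) Z3zero.
Proof.
move=> /eqZ3_0P /(_ c.+1); rewrite pow3S -[X in (_ %| X)%Z]mul1r.
by rewrite dvdz_mul2r ?pow3_neq0.
Qed.

Section HenselCube.
Variables c d : Z3.
Hypotheses (c_Z3 : is_Z3 c) (d_Z3 : is_Z3 d) (c_unit : unit3 (c 1%N)).

Definition hensel_inv k y :=
  unit3 y /\ (c (k + 2)%N * y ^+ 3 = d (k + 2)%N %[mod pow3 (k + 2)%N])%Z.

(* Newton's step for c Y^3 - d: the derivative 3 c y^2 is 3 times a unit whose inverse
   mod 3 is c y^2 itself, since squares of units are 1 mod 3. *)
Definition hensel_step k y : int :=
  let m := ((c (k + 3)%N * y ^+ 3 - d (k + 3)%N) %/ pow3 (k + 2)%N)%Z in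
  y - pow3 k.+1 * (m * c (k + 3)%N * y ^+ 2).

Lemma hensel_stepP k y : hensel_inv k y -> hensel_inv k.+1 (hensel_step k y).
Proof.
rewrite /hensel_inv /hensel_step !addSn -!addnS => -[y_unit hy].
set C := c (k + 3)%N; set m := ((C * y ^+ 3 - d (k + 3)%N) %/ pow3 (k + 2)%N)%Z.
have C_unit : unit3 C.
  have k3_ge1 : (1 <= k + 3)%N by rewrite addn3.
  by have := Z3_mod c_Z3 k3_ge1; rewrite pow3_1 => /unit3_mod ->.
have dvd_m : (pow3 (k + 2)%N %| C * y ^+ 3 - d (k + 3)%N)%Z.
  have le23 : (k + 2 <= k + 3)%N by rewrite leq_add2l.
  apply/eqz_modP; rewrite (Z3_mod d_Z3 le23) -hy.
  exact: eqz_modM (Z3_mod c_Z3 le23) _.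
have dE : d (k + 3)%N = C * y ^+ 3 - m * pow3 (k + 2)%N by rewrite divzK // opprB addrC subrK.
have [r rE] : exists r, 1 - (C * y ^+ 2) ^+ 2 = r * 3.
  by apply/dvdzP/eqz_modP; rewrite unit3_sqr // unit3M // unit3X.
split.
  have y'E : (y - pow3 k.+1 * (m * C * y ^+ 2) = y %[mod 3])%Z.
    by apply/eqz_modP; rewrite addrAC subrr add0r rpredN pow3S -mulrA dvdz_mulr.
  by rewrite (unit3_mod y'E).
apply/eqz_modP/dvdzP; rewrite dE !pow3D pow3S (_ : pow3 2 = 9) // (_ : pow3 3 = 27) //.
exists (m * r + pow3 k * C * y * (m * C * y ^+ 2) ^+ 2 - pow3 k ^+ 2 * C * (m * C * y ^+ 2) ^+ 3).
apply/eqP; rewrite -subr_eq0; apply/eqP.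
transitivity (9 * pow3 k * m * (1 - (C * y ^+ 2) ^+ 2 - r * 3)); first by ring.
by rewrite rE subrr mulr0.
Qed.

Lemma hensel_cube y0 : unit3 y0 -> (c 2%N * y0 ^+ 3 = d 2%N %[mod 9])%Z ->
  exists y, [/\ is_Z3 y, unit3 (y 1%N) & forall k, (c k * y k ^+ 3 = d k %[mod pow3 k])%Z].
Proof.
move=> y0_unit hy0; pose y k := iteri k hensel_step y0.
have inv k : hensel_inv k (y k) by elim: k => [|k /hensel_stepP].
exists y; split; first (apply/is_Z3P => k; apply/eqz_modP).
- rewrite /= /hensel_step addrAC subrr add0r rpredN pow3S -mulrA mulrCA.
  exact: dvdz_mulr.
- by case: (inv 1%N).
- move=> k; have k_le := leq_addr 2 k.
  rewrite -(Z3_mod d_Z3 k_le) -(eqz_mod_dvdl (dvdz_pow3 k_le) (proj2 (inv k))).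
  exact: eqz_modM (esym (Z3_mod c_Z3 k_le)) _.
Qed.

End HenselCube.

(** * Integral zeros *)

Definition has_Z3_point n (a : 'I_n.+1 -> Z3) : Prop :=
  exists z : 'I_n.+1 -> Z3,
    [/\ forall i, is_Z3 (z i), exists i, ~ eqZ3 (z i) Z3zero &
        forall k, (pow3 k %| \sum_i a i k * z i k ^+ 3)%Z].

Lemma Q3sumE (I : eqType) (r : seq I) (F : I -> Q3) :
  let N := (\sum_(i <- r) (F i).2)%N in
  (\big[Q3add/Q3zero]_(i <- r) F i).2 = N /\
  forall k, (\big[Q3add/Q3zero]_(i <- r) F i).1 k = \sum_(i <- r) (F i).1 k * pow3 (N - (F i).2).
Proof.
elim: r => [|x r [ih1 ih2]]; first by split => [|k]; rewrite !big_nil.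
rewrite /= !big_cons /= ih1; split=> // k.
rewrite ih2 big_cons addKn mulr_suml; congr (_ + _); apply: eq_big_seq => i ri.
have le_i : ((F i).2 <= \sum_(j <- r) (F j).2)%N by rewrite (big_rem i) //= leq_addr.
by rewrite -mulrA -pow3D addnC addnBA.
Qed.

Lemma Q3eq0P p : Q3eq p Q3zero <-> eqZ3 p.1 Z3zero.
Proof. by split=> h k; move: (h k); rewrite /= !mul0r mulr1. Qed.

Lemma has_Z3_Q3_point n (a : 'I_n.+1 -> Z3) : has_Z3_point a -> has_Q3_point a.
Proof.
case=> z [z_Z3 [i0 zi0] zE]; exists (fun i => (z i, 0%N)); split=> //; split.
  by exists i0; rewrite Q3eq0P.
have [_ sumE] := Q3sumE (index_enum 'I_n.+1) (fun i => Q3mul (Q3ofZ3 (a i)) (Q3cube (z i, 0%N))).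
move=> k; rewrite /= mul0r mulr1 sumE eqz_mod_dvd subr0.
rewrite (eq_bigr (fun i => a i k * z i k ^+ 3)) ?zE // => i _.
by rewrite big1_eq /= mulr1 /Z3mul; ring.
Qed.

Lemma has_Q3_Z3_point n (a : 'I_n.+1 -> Z3) : has_Q3_point a -> has_Z3_point a.
Proof.
case=> x [x_Q3 [[i0 xi0] xE]]; pose N := (\sum_i (x i).2)%N.
exists (fun i => Z3mul (x i).1 (fun=> pow3 (N - (x i).2))); split.
- by move=> i; apply: is_Z3M; [apply: x_Q3 | apply: is_Z3_const].
- exists i0; apply: Z3mul_neq0; [exact: x_Q3 | exact: is_Z3_const | | exact: pow3_Z3_neq0].
  by rewrite -Q3eq0P.
- have [_ sumE] := Q3sumE (index_enum 'I_n.+1) (fun i => Q3mul (Q3ofZ3 (a i)) (Q3cube (x i))).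
  have N3 : (\sum_(i <- index_enum 'I_n.+1) (Q3mul (Q3ofZ3 (a i)) (Q3cube (x i))).2 = 3 * N)%N.
    by rewrite big_distrr; apply: eq_bigr => i _ /=; lia.
  move=> k; move: (xE k); rewrite /= mul0r mulr1 sumE eqz_mod_dvd subr0 N3.
  congr (_ %| _)%Z; apply: eq_bigr => i _ /=.
  rewrite (_ : (0 + ((x i).2 + ((x i).2 + (x i).2)))%N = 3 * (x i).2)%N; last lia.
  by rewrite -mulnBr pow3_3M /Z3mul; ring.
Qed.

Lemma has_Q3_pointE n (a : 'I_n.+1 -> Z3) : has_Q3_point a <-> has_Z3_point a.
Proof. by split; [apply: has_Q3_Z3_point | apply: has_Z3_Q3_point]. Qed.

Lemma has_Z3_point_simeq n (a b : 'I_n.+1 -> Z3) : (forall i, is_Z3 (b i)) ->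
  simeq a b -> has_Z3_point a -> has_Z3_point b.
Proof.
move=> b_Z3 [al [als [s [al_Z3 [al_neq0 [als_Z3 abE]]]]]] [w [w_Z3 [i0 wi0] wE]].
pose q i := (als i).1; pose N i := (als i).2; pose R i := ((\sum_j N j) - N i)%N.
have NR i : (N i + R i = \sum_j N j)%N by rewrite subnKC // (bigD1 i) //= leq_addr.
have q_Z3 i : is_Z3 (q i) by case: (als_Z3 i).
have q_neq0 i : ~ eqZ3 (q i) Z3zero by case: (als_Z3 i) => _; rewrite Q3eq0P.
pose z' i := Z3mul (Z3mul (w i) (q i)) (fun=> pow3 (R i)).
have z'_Z3 i : is_Z3 (z' i) by do 2 apply: is_Z3M => //.
exists (fun j => z' (s^-1 j)%g); split=> //.
  exists (s i0); rewrite permK; apply: Z3mul_neq0 => //; last exact: pow3_Z3_neq0.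
  - exact: is_Z3M.
  - exact: Z3mul_neq0.
pose S k := \sum_j b j k * z' (s^-1 j)%g k ^+ 3.
have S_Z3 : is_Z3 S.
  apply/is_Z3P => k; apply: eqz_mod_sum => j _.
  apply: eqz_modM; first by move/is_Z3P: (b_Z3 j).
  by apply: eqz_modX; move/is_Z3P: (z'_Z3 (s^-1 j)%g).
have al_neq0' : ~ eqZ3 al.1 Z3zero by rewrite -Q3eq0P.
apply/eqZ3_0P; apply: (eqZ3_mul0l al_Z3 S_Z3 al_neq0'); apply/eqZ3_0P => k.
pose P := pow3 (al.2 + 3 * \sum_j N j)%N.
rewrite /Z3mul /S mulr_sumr (reindex_inj (@perm_inj _ s)) /=.
rewrite (eqz_mod_dvdz (_ : _ = \sum_i P * (a i k * w i k ^+ 3) %[mod pow3 k])%Z);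
  first by rewrite -mulr_sumr; apply/dvdz_mull/wE.
apply: eqz_mod_sum => i _; rewrite permK.
have := abE i k; rewrite /= /Z3mul mulr1 addn0 => /eqP abEik.
rewrite (_ : _ * _ = al.1 k * b (s i) k * (q i k * (q i k * q i k)) * (w i k * pow3 (R i)) ^+ 3);
  last by rewrite /z' /Z3mul; ring.
rewrite (_ : P * _ = a i k * pow3 (al.2 + (N i + (N i + N i))) * (w i k * pow3 (R i)) ^+ 3).
  by rewrite -modzMml -abEik modzMml.
by rewrite /P -(NR i) mulnDr !pow3D pow3_0; ring.
Qed.

Lemma has_Z3_point_sub m n (a : 'I_n.+1 -> Z3) (g : 'I_m.+1 -> 'I_n.+1) :
  injective g -> has_Z3_point (a \o g) -> has_Z3_point a.
Proof.
move=> g_inj [w [w_Z3 [j0 wj0] wE]].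
pose z i := if [pick j | g j == i] is Some j then w j else Z3zero.
have zE j : z (g j) = w j.
  by rewrite /z; case: pickP => [j' /eqP/g_inj -> | /(_ j)]; rewrite ?eqxx.
exists z; split.
- by move=> i; rewrite /z; case: pickP => [j _|_]; [apply: w_Z3 | apply: is_Z3_const].
- by exists (g j0); rewrite zE.
move=> k; move: (wE k); rewrite (partition_big g predT) //=.
congr (_ %| _)%Z; apply: eq_bigr => i _; rewrite /z.
case: pickP => [j /eqP gj | nj]; last first.
  by rewrite big_pred0 ?expr0n ?mulr0.
rewrite (big_pred1 j) => [|j']; first by rewrite gj.
by rewrite -gj (inj_eq g_inj).
Qed.

Lemma is_Z3_sum (I : finType) (P : pred I) (F : I -> Z3) :
  (forall i, P i -> is_Z3 (F i)) -> is_Z3 (fun k => \sum_(i | P i) F i k).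
Proof. by move=> F_Z3; apply/is_Z3P => k; apply: eqz_mod_sum => i /F_Z3/is_Z3P. Qed.

Lemma has_Z3_point_mod9 n (a : 'I_n.+1 -> Z3) (s : 'I_n.+1 -> int) j :
  (forall i, is_Z3 (a i)) -> (forall i, s i \in signs) -> unit3 (a j 1%N) -> s j != 0 ->
  (9 %| \sum_i a i 2%N * s i)%Z -> has_Z3_point a.
Proof.
move=> a_Z3 s_sign aj_unit sj_neq0 sum9.
pose d k := - \sum_(i | i != j) a i k * s i ^+ 3.
have d_Z3 : is_Z3 d.
  apply/is_Z3P => k; apply: eqz_modN; move: k; apply/is_Z3P/is_Z3_sum => i _.
  exact: is_Z3M.
have sumE k y : \sum_i a i k * (if i == j then y else s i) ^+ 3 = a j k * y ^+ 3 - d k.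
  by rewrite /d opprK (bigD1 j) //= eqxx; congr (_ + _); apply: eq_bigr => i /negbTE ->.
have sj_unit : unit3 (s j) by move: (s_sign j) sj_neq0; rewrite !inE => /or3P [] /eqP ->.
have [|y [y_Z3 y_unit yE]] := hensel_cube (a_Z3 j) d_Z3 aj_unit sj_unit.
  apply/eqz_modP; rewrite -sumE.
  by rewrite (eq_bigr (fun i => a i 2%N * s i)) // => i _; case: eqP => [->|];
    rewrite sign_cube.
exists (fun i => if i == j then y else fun=> s i); split.
- by move=> i; case: eqP => _; [exact: y_Z3 | exact: is_Z3_const].
- by exists j; rewrite eqxx => /eqZ3_0P /(_ 1%N); rewrite pow3_1 (negbTE y_unit).
- move=> k; rewrite (eq_bigr (fun i => a i k * (if i == j then y k else s i) ^+ 3)).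
    by rewrite sumE; apply/eqz_modP/yE.
  by move=> i _; case: eqP.
Qed.

(** * Normalizing valuations *)

Definition Z3unit (x : Z3) (e : nat) : Z3 := fun k => (x (k + e)%N %/ pow3 e)%Z.

Lemma Z3unitE x e k : is_Z3 x -> valZ3 x e -> pow3 e * Z3unit x e k = x (k + e)%N.
Proof. by move=> x_Z3 x_val; rewrite mulrC divzK // (val_dvd x_Z3 x_val) ?leq_addl. Qed.

Lemma is_Z3_unit x e : is_Z3 x -> valZ3 x e -> is_Z3 (Z3unit x e).
Proof.
move=> x_Z3 x_val; apply/is_Z3P => k; apply/eqz_modP.
rewrite -(dvdz_mul2l (pow3_neq0 e)) mulrBr !Z3unitE // -pow3D addSn (addnC e k).
exact/eqz_modP/(Z3_mod x_Z3 (leqnSn _)).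
Qed.

Lemma val_pow3_unit x e f : is_Z3 x -> valZ3 x e ->
  valZ3 (Z3mul (fun=> pow3 f) (Z3unit x e)) f.
Proof.
move=> x_Z3 x_val; split; first exact: dvdz_mulr.
rewrite /Z3mul pow3S mulrC dvdz_mul2r ?pow3_neq0 //.
have e_lt : (e < f.+1 + e)%N by rewrite addSn ltnS leq_addl.
have [u xE u_unit] := val_unit x_Z3 x_val e_lt.
by rewrite /Z3unit xE mulKz ?pow3_neq0.
Qed.

Lemma int_nat_diff (z : int) : exists p : nat * nat, z = p.1%:Z - p.2%:Z.
Proof.
by case: z => k; [exists (k, 0%N) | exists (0%N, k.+1)]; rewrite /= ?NegzE ?subr0 ?sub0r.
Qed.

Lemma simeq_pow3 n (x y : 'I_n.+1 -> Z3) (s : 'S_n.+1) (C D : nat) (M N : 'I_n.+1 -> nat) :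
  (forall i k, pow3 (D + 3 * N i) * x i k = pow3 (C + 3 * M i) * y (s i) k %[mod pow3 k])%Z ->
  simeq x y.
Proof.
move=> xyE; have pow3_Q3 c d : is_Q3 (fun=> pow3 c, d) /\ ~ Q3eq (fun=> pow3 c, d) Q3zero.
  by split; [exact: is_Z3_const | rewrite Q3eq0P; exact: pow3_Z3_neq0].
exists (fun=> pow3 C, D), (fun i => (fun=> pow3 (M i), N i)), s.
split; first exact: (pow3_Q3 C D).1; split; first exact: (pow3_Q3 C D).2.
split=> [i|i k]; first exact: pow3_Q3.
apply/eqP; rewrite /= /Z3mul mulrC pow3_0 mulr1 addn0 (_ : N i + (N i + N i) = 3 * N i)%N; last lia.
by rewrite xyE pow3D pow3_3M; congr (_ %% _)%Z; ring.
Qed.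

Lemma simv_normalize n (a : 'I_n.+1 -> Z3) (e f : 'I_n.+1 -> nat) :
  (forall i, is_Z3 (a i)) -> val_vec a e -> simv (fun i => (e i)%:Z) (fun i => (f i)%:Z) ->
  exists b, [/\ forall i, is_Z3 (b i), val_vec b f, simeq b a & simeq a b].
Proof.
move=> a_Z3 a_val [s [c [m fE]]].
have [[C D] /= cE] := int_nat_diff c.
have [MN mE] := fin_all_exists (fun i => int_nat_diff (m i)).
pose M i := (MN i).1; pose N i := (MN i).2.
pose b i := Z3mul (fun=> pow3 (f i)) (Z3unit (a (s i)) (e (s i))).
have expE i : (f i + D + 3 * N i = e (s i) + C + 3 * M i)%N.
  by move: (fE i) (mE i); rewrite cE /M /N; lia.
have baE i k : (pow3 (D + 3 * N i) * b i k = pow3 (C + 3 * M i) * a (s i) k %[mod pow3 k])%Z.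
  rewrite /b /Z3mul mulrA -pow3D addnC addnA expE -addnA pow3D -mulrA mulrCA Z3unitE //.
  exact: eqz_modM _ (Z3_mod (a_Z3 _) (leq_addr _ _)).
exists b; split.
- by move=> i; apply: is_Z3M; [exact: is_Z3_const | exact: is_Z3_unit].
- by move=> i; exact: val_pow3_unit.
- exact: simeq_pow3 baE.
- apply: (simeq_pow3 (s := s^-1%g) (C := D) (D := C) (M := N \o s^-1%g) (N := M \o s^-1%g)).
  by move=> j k; rewrite /= baE permKV.
Qed.

(** * Zeros modulo 9 *)

Definition residues9 : seq int := [seq i%:Z | i <- iota 0 9].
Definition unit_residues9 : seq int := [seq r <- residues9 | unit3 r].

Lemma modz9_residue x : (x %% 9)%Z \in residues9.
Proof.
apply/mapP; exists `|(x %% 9)%Z|%N; last by rewrite gez0_abs ?modz_ge0.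
by rewrite mem_iota /= -ltz_nat gez0_abs ?ltz_pmod ?modz_ge0.
Qed.

Lemma modz9_unit_residue x : unit3 x -> (x %% 9)%Z \in unit_residues9.
Proof.
have mod_unit : unit3 (x %% 9)%Z = unit3 x.
  by apply: unit3_mod; apply: (eqz_mod_dvdl (d := 9)); rewrite ?modz_mod.
by rewrite mem_filter mod_unit modz9_residue => ->.
Qed.

Lemma dvdz_sum_modz d (I : finType) (F G : I -> int) :
  (d %| \sum_i F i * G i)%Z = (d %| \sum_i (F i %% d)%Z * G i)%Z.
Proof. by apply/eqz_mod_dvdz/eqz_mod_sum => i _; apply: eqz_modM; rewrite ?modz_mod. Qed.

Definition solvable_001 (A B C : int) : bool :=
  has (fun x => has (fun y => has (fun z =>
    ((x != 0) || (y != 0)) && (9 %| A * x + B * y + C * z)%Z) signs) signs) signs.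

Lemma solvable_001_residues :
  all (fun A => all (fun B => all (solvable_001 A B) [:: 3; 6]) unit_residues9) unit_residues9.
Proof. by vm_compute. Qed.

Definition solvable_0000 (A B C D : int) : bool :=
  has (fun x => has (fun y => has (fun z => has (fun w =>
    [|| x != 0, y != 0, z != 0 | w != 0] && (9 %| A * x + B * y + C * z + D * w)%Z)
  signs) signs) signs) signs.

Lemma solvable_0000_residues :
  all (fun A => all (fun B => all (fun C => all (solvable_0000 A B C)
    unit_residues9) unit_residues9) unit_residues9) unit_residues9.
Proof. by vm_compute. Qed.

Definition solvable_000 (A B C : int) : bool :=
  has (fun x => has (fun y => has (fun z =>
    [|| x != 0, y != 0 | z != 0] && (9 %| A * x + B * y + C * z)%Z) signs) signs) signs.

Definition full9 (A B C : int) : bool :=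
  all (fun r => has (fun t => (r == t %[mod 9])%Z || (r == - t %[mod 9])%Z) [:: A; B; C] ==
                has (fun t => (r == t %[mod 9])%Z) [:: 1; 2; 4; -1; -2; -4]) residues9.

Lemma solvable_000_residues :
  all (fun A => all (fun B => all (fun C => solvable_000 A B C == ~~ full9 A B C)
    unit_residues9) unit_residues9) unit_residues9.
Proof. by vm_compute. Qed.

Definition nvec n (l : seq nat) : 'I_n -> nat := fun i => nth 0%N l i.

Lemma big_ord3 (F : 'I_3 -> int) : \sum_i F i = F (inord 0) + F (inord 1) + F (inord 2).
Proof.
rewrite !big_ord_recl big_ord0 addr0 !addrA.
by congr (_ + _ + _); congr F; apply: val_inj; rewrite /= inordK.
Qed.

Lemma big_ord4 (F : 'I_4 -> int) :
  \sum_i F i = F (inord 0) + F (inord 1) + F (inord 2) + F (inord 3).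
Proof.
rewrite !big_ord_recl big_ord0 addr0 !addrA.
by congr (_ + _ + _ + _); congr F; apply: val_inj; rewrite /= inordK.
Qed.

Lemma nvec_inord n l k : (k < n.+1)%N -> nvec l (inord k : 'I_n.+1) = nth 0%N l k.
Proof. by move=> lt_k; rewrite /nvec inordK. Qed.

Lemma val0_unit x k : is_Z3 x -> valZ3 x 0 -> (0 < k)%N -> unit3 (x k).
Proof.
by move=> x_Z3 /val_unit3 x_unit k_gt0; rewrite (unit3_mod (Z3_mod x_Z3 k_gt0)).
Qed.

Lemma val1_residue x : is_Z3 x -> valZ3 x 1 -> (x 2%N %% 9)%Z \in [:: 3; 6].
Proof.
move=> x_Z3 x_val; have [u -> u_unit] := val_unit x_Z3 x_val (ltnSn 1).
have [q [] uE] := int_mod3_cases u; move: u_unit; rewrite uE /unit3 ?dvdz_mulr //.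
- by move=> _; rewrite pow3_1 (_ : 3 * _ = q * 9 + 3) ?modzMDl //; ring.
- by move=> _; rewrite pow3_1 (_ : 3 * _ = (q - 1) * 9 + 6) ?modzMDl //; ring.
Qed.

Lemma has_Z3_point_001 (b : 'I_3 -> Z3) :
  (forall i, is_Z3 (b i)) -> val_vec b (nvec [:: 0; 0; 1]%N) -> has_Z3_point b.
Proof.
move=> b_Z3 b_val; have b_valE k : (k < 3)%N -> valZ3 (b (inord k)) (nth 0%N [:: 0; 0; 1] k).
  by move=> lt_k; rewrite -(nvec_inord (n := 2)).
have b0_val := b_valE 0%N isT; have b1_val := b_valE 1%N isT; have b2_val := b_valE 2%N isT.
have := solvable_001_residues.
move=> /allP/(_ _ (modz9_unit_residue (val0_unit (b_Z3 _) b0_val (isT : 0 < 2)%N))).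
move=> /allP/(_ _ (modz9_unit_residue (val0_unit (b_Z3 _) b1_val (isT : 0 < 2)%N))).
move=> /allP/(_ _ (val1_residue (b_Z3 _) b2_val)).
move=> /hasP[x x_sign /hasP[y y_sign /hasP[z z_sign /andP[xy_neq0 sum9]]]].
pose s (i : 'I_3) := nth 0 [:: x; y; z] i.
have sE k : (k < 3)%N -> s (inord k) = nth 0 [:: x; y; z] k by move=> lt_k; rewrite /s inordK.
apply: (@has_Z3_point_mod9 _ b s (inord (x == 0))) => //.
- by case=> -[|[|[|]]].
- by case: (x == 0); apply/val_unit3.
- rewrite sE; last by case: (x == 0).
  by case: (eqVneq x 0) xy_neq0 => [-> |].
- by rewrite (dvdz_sum_modz _ (fun i => b i 2%N)) big_ord3 !sE.
Qed.

Lemma has_Z3_point_0000 (b : 'I_4 -> Z3) :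
  (forall i, is_Z3 (b i)) -> val_vec b (nvec [:: 0; 0; 0; 0]%N) -> has_Z3_point b.
Proof.
move=> b_Z3 b_val; have b_unit k : (k < 4)%N -> unit3 (b (inord k) 2%N).
  move=> lt_k; apply: val0_unit => //; move: (b_val (inord k)).
  by rewrite nvec_inord //; case: k lt_k => [|[|[|[|]]]].
have := solvable_0000_residues.
move=> /allP/(_ _ (modz9_unit_residue (b_unit 0%N isT))).
move=> /allP/(_ _ (modz9_unit_residue (b_unit 1%N isT))).
move=> /allP/(_ _ (modz9_unit_residue (b_unit 2%N isT))).
move=> /allP/(_ _ (modz9_unit_residue (b_unit 3%N isT))).
move=> /hasP[x x_sign /hasP[y y_sign /hasP[z z_sign /hasP[w w_sign /andP[xyzw_neq0 sum9]]]]].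
pose s (i : 'I_4) := nth 0 [:: x; y; z; w] i.
have sE k : (k < 4)%N -> s (inord k) = nth 0 [:: x; y; z; w] k by move=> lt_k; rewrite /s inordK.
pose j := find (fun t => t != 0) [:: x; y; z; w].
have has_nz : has (fun t => t != 0) [:: x; y; z; w] by rewrite /= orbF.
have j_lt4 : (j < 4)%N by rewrite -[4%N]/(size [:: x; y; z; w]) -has_find.
apply: (@has_Z3_point_mod9 _ b s (inord j)) => //.
- by case=> -[|[|[|[|]]]].
- apply/val_unit3; move: (b_val (inord j)); rewrite nvec_inord //.
  by case: (j) j_lt4 => [|[|[|[|]]]].
- by rewrite sE // (nth_find 0 has_nz).
- by rewrite (dvdz_sum_modz _ (fun i => b i 2%N)) big_ord4 !sE.
Qed.

Lemma full9_modz A B C : full9 (A %% 9)%Z (B %% 9)%Z (C %% 9)%Z = full9 A B C.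
Proof. by rewrite /full9 /= !modzNm !modz_mod. Qed.

Lemma solvable_000E A B C : unit3 A -> unit3 B -> unit3 C ->
  solvable_000 (A %% 9)%Z (B %% 9)%Z (C %% 9)%Z = ~~ full9 A B C.
Proof.
move=> A_unit B_unit C_unit; rewrite -full9_modz; apply/eqP.
by have /allP/(_ _ (modz9_unit_residue A_unit)) /allP/(_ _ (modz9_unit_residue B_unit))
  /allP/(_ _ (modz9_unit_residue C_unit)) := solvable_000_residues.
Qed.

Section Valuations0002.
Variable b : 'I_4 -> Z3.
Hypotheses (b_Z3 : forall i, is_Z3 (b i)) (b_val : val_vec b (nvec [:: 0; 0; 0; 2]%N)).

Let A k := b (inord k) 2%N.

Lemma unit3_0002 k : (k < 3)%N -> unit3 (A k).
Proof.
move=> lt_k; rewrite /A; apply: val0_unit => //; move: (b_val (inord k)).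
by rewrite nvec_inord ?(ltn_trans lt_k) //; case: k lt_k => [|[|[|]]].
Qed.

Lemma has_Z3_point_0002 : ~~ full9 (A 0) (A 1) (A 2) -> has_Z3_point b.
Proof.
rewrite -solvable_000E ?unit3_0002 //.
move=> /hasP[x x_sign /hasP[y y_sign /hasP[z z_sign /andP[xyz_neq0 sum9]]]].
pose s (i : 'I_4) := nth 0 [:: x; y; z; 0] i.
have sE k : (k < 4)%N -> s (inord k) = nth 0 [:: x; y; z; 0] k by move=> lt_k; rewrite /s inordK.
pose j := find (fun t => t != 0) [:: x; y; z].
have has_nz : has (fun t => t != 0) [:: x; y; z] by rewrite /= orbF.
have j_lt3 : (j < 3)%N by rewrite -[3%N]/(size [:: x; y; z]) -has_find.
apply: (@has_Z3_point_mod9 _ b s (inord j)) => //.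
- by case=> -[|[|[|[|]]]].
- by apply/val_unit3; move: (b_val (inord j)); rewrite nvec_inord ?(ltn_trans j_lt3) //;
    case: (j) j_lt3 => [|[|[|]]].
- rewrite sE ?(ltn_trans j_lt3) //; have := nth_find 0 has_nz; rewrite -/j.
  by case: (j) j_lt3 => [|[|[|]]].
- by rewrite (dvdz_sum_modz _ (fun i => b i 2%N)) big_ord4 !sE // mulr0 addr0.
Qed.

(* b_3 vanishes mod 9, so the cubes y_i^3 = 0, 1, -1 (mod 9) of y_0, y_1, y_2 would give a
   solution in signs of the reduction mod 9, which full9 excludes unless they are all 0. *)
Lemma descent_0002_units K (y : 'I_4 -> int) : full9 (A 0) (A 1) (A 2) -> (2 <= K)%N ->
  (9 %| \sum_i b i K * y i ^+ 3)%Z -> forall k, (k < 3)%N -> (3 %| y (inord k))%Z.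
Proof.
move=> full K_ge2 sum9.
have b_mod9 i : (b i K = (b i 2%N %% 9)%Z %[mod 9])%Z by rewrite modz_mod (Z3_mod (b_Z3 i) K_ge2).
have b3_val : valZ3 (b (inord 3)) 2 by move: (b_val (inord 3)); rewrite nvec_inord.
have [s0 s0_sign [y0E s0E]] := cube_mod9 (y (inord 0)).
have [s1 s1_sign [y1E s1E]] := cube_mod9 (y (inord 1)).
have [s2 s2_sign [y2E s2E]] := cube_mod9 (y (inord 2)).
have sum9' : (9 %| (A 0 %% 9)%Z * s0 + (A 1 %% 9)%Z * s1 + (A 2 %% 9)%Z * s2)%Z.
  have sumE : (\sum_i b i K * y i ^+ 3 =
               (A 0 %% 9)%Z * s0 + (A 1 %% 9)%Z * s1 + (A 2 %% 9)%Z * s2 + 0 %[mod 9])%Z.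
    rewrite big_ord4; apply: eqz_modD.
      by apply: eqz_modD; first apply: eqz_modD; apply: eqz_modM (b_mod9 _) _.
    apply/dvdz_modP/dvdz_mulr; rewrite (eqz_mod_dvdz (Z3_mod (b_Z3 _) K_ge2)).
    exact: (val_dvd (b_Z3 _) b3_val).
  by rewrite -[X in (_ %| X)%Z]addr0 -(eqz_mod_dvdz sumE).
have : ~~ solvable_000 (A 0 %% 9)%Z (A 1 %% 9)%Z (A 2 %% 9)%Z.
  by rewrite solvable_000E ?full ?unit3_0002.
move=> /hasPn/(_ s0 s0_sign)/hasPn/(_ s1 s1_sign)/hasPn/(_ s2 s2_sign).
rewrite sum9' andbT !negb_or !negbK => /and3P[/eqP s0_0 /eqP s1_0 /eqP s2_0].
case=> [|[|[|]]] // _; [move: s0E | move: s1E | move: s2E];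
  by rewrite ?s0_0 ?s1_0 ?s2_0 eqxx => /esym/negbNE.
Qed.

Lemma descent_0002 K (y : 'I_4 -> int) : full9 (A 0) (A 1) (A 2) -> (3 <= K)%N ->
  (27 %| \sum_i b i K * y i ^+ 3)%Z -> forall i, (3 %| y i)%Z.
Proof.
move=> full K_ge3 sum27.
have y_dvd3 := descent_0002_units full (ltnW K_ge3) (dvdz_trans (isT : (9 %| 27)%Z) sum27).
have y3_dvd3 : (3 %| y (inord 3))%Z.
  have b3_val : valZ3 (b (inord 3)) 2 by move: (b_val (inord 3)); rewrite nvec_inord.
  have [u b3E u_unit] := val_unit (b_Z3 _) b3_val (ltnSn 2).
  have cube27 k : (k < 3)%N -> (27 %| b (inord k) K * y (inord k) ^+ 3)%Z.
    by move=> /y_dvd3/dvdzP[w ->]; rewrite exprMn; apply/dvdz_mull/dvdz_mull.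
  move: sum27; rewrite big_ord4 rpredDl; last by rewrite !rpredD ?cube27.
  rewrite -[27]/(pow3 3) (eqz_mod_dvdz (eqz_modM (Z3_mod (b_Z3 _) K_ge3) (erefl _))).
  rewrite b3E (pow3S 2) [3 * _]mulrC -mulrA dvdz_mul2l ?pow3_neq0 // -pow3_1.
  rewrite dvdz_pow3_unitl // pow3_1.
  exact: contraTT (@unit3X _ 3).
move=> i; rewrite -(inord_val i); case: i => -[|[|[|[|//]]]] _ /=.
- exact: y_dvd3.
- exact: y_dvd3.
- exact: y_dvd3.
- exact: y3_dvd3.
Qed.

Lemma no_Z3_point_0002 : full9 (A 0) (A 1) (A 2) -> ~ has_Z3_point b.
Proof.
move=> full [z [z_Z3 [i0 zi0] zE]]; apply: zi0; apply/eqZ3_0P.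
suff z_dvd t i : (pow3 t %| z i t)%Z by move=> k; apply: z_dvd.
elim: t i => [|t ih] i; first by rewrite pow3_0 dvd1z.
pose K := (3 * t + 3)%N; have t_le : (t.+1 <= K)%N by rewrite /K; lia.
have zK i' : (pow3 t %| z i' K)%Z.
  by rewrite (eqz_mod_dvdz (Z3_mod (z_Z3 i') (ltnW t_le))) ih.
pose y i' := (z i' K %/ pow3 t)%Z; have zKE i' : z i' K = y i' * pow3 t by rewrite divzK.
have sum27 : (27 %| \sum_i b i K * y i ^+ 3)%Z.
  move: (zE K); rewrite (eq_bigr (fun i => pow3 (3 * t) * (b i K * y i ^+ 3))) => [|i' _].
    by rewrite -mulr_sumr /K pow3D dvdz_mul2l ?pow3_neq0.
  by rewrite zKE pow3_3M; ring.
have /dvdzP[w yE] := descent_0002 full (leq_addl _ _) sum27 i.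
rewrite -(eqz_mod_dvdz (Z3_mod (z_Z3 i) t_le)) zKE yE pow3S.
by apply/dvdzP; exists w; ring.
Qed.

End Valuations0002.

Lemma residues_fullE (b : 'I_4 -> Z3) :
  residues_full b <-> full9 (b (inord 0) 2%N) (b (inord 1) 2%N) (b (inord 2) 2%N).
Proof.
set A := [:: b (inord 0) 2%N; b (inord 1) 2%N; b (inord 2) 2%N].
pose hasA r := has (fun t => (r == t %[mod 9])%Z || (r == - t %[mod 9])%Z) A.
pose hasL r := has (fun t => (r == t %[mod 9])%Z) [:: 1; 2; 4; -1; -2; -4].
have hasA_mod r : hasA (r %% 9)%Z = hasA r by rewrite /hasA /= !modz_mod.
have hasL_mod r : hasL (r %% 9)%Z = hasL r by rewrite /hasL /= !modz_mod.
have hasAP r : (exists i : 'I_4, (i < 3)%N /\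
    ((r == b i 2%N %[mod 9])%Z \/ (r == - b i 2%N %[mod 9])%Z)) <-> hasA r.
  split=> [[i [lt_i3 /orP r_i]] | /hasP[t]].
    apply/hasP; exists (b i 2%N) => //.
    by rewrite -(inord_val i) !inE; case: i lt_i3 {r_i} => -[|[|[|]]] //= _ _; rewrite eqxx ?orbT.
  rewrite !inE => /or3P[] /eqP -> /orP r_t;
    [exists (inord 0) | exists (inord 1) | exists (inord 2)]; by rewrite inordK.
have hasLP r : (exists t : int, t \in [:: 1; 2; 4; -1; -2; -4] /\ (r == t %[mod 9])%Z) <-> hasL r.
  by split=> [[t [t_in r_t]] | /hasP[t t_in r_t]]; [apply/hasP; exists t | exists t].
rewrite /residues_full /full9; split=> [full | /allP full r].
  by apply/allP => r _; apply/eqP; apply/idP/idP => [/hasAP/full/hasLP | /hasLP/full/hasAP].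
move: (full _ (modz9_residue r)) => /eqP; rewrite -/(hasA _) -/(hasL _) hasA_mod hasL_mod => AL.
by split=> [/hasAP h | /hasLP h]; [apply/hasLP; rewrite -AL | apply/hasAP; rewrite AL].
Qed.

(** * Valuation patterns *)

Fixpoint tuples (s : seq nat) (k : nat) : seq (seq nat) :=
  if k is k'.+1 then [seq i :: l | i <- s, l <- tuples s k'] else [:: [::]].

Lemma mem_tuples s k l : (l \in tuples s k) = (size l == k) && all (mem s) l.
Proof.
elim: k l => [|k ih] [|i l] //=.
  by apply/allpairsP => -[[j l'] [_ _]].
apply/allpairsP/and3P => [[[j l'] [/= j_in l'_in [-> ->]]] | [/eqP[sz] i_in l_in]].
  by move: l'_in; rewrite ih => /andP[/eqP <- l'_s]; split.
by exists (i, l); split=> //=; rewrite ih sz eqxx.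
Qed.

Definition val_patterns : seq (seq nat) := [:: [:: 0; 0; 1]; [:: 0; 0; 0; 0]]%N.

Lemma inord_nth_inj n m (idx : seq nat) : size idx = m -> uniq idx ->
  all (fun i => i <= n)%N idx -> injective (fun j : 'I_m => inord (nth 0%N idx j) : 'I_n.+1).
Proof.
move=> sz uniq_idx le_idx j1 j2 /(congr1 val); rewrite /= !inordK;
  try by rewrite ltnS (allP le_idx) ?mem_nth ?sz.
by move/eqP; rewrite nth_uniq ?sz // => /eqP/val_inj.
Qed.

Lemma val_vec_sub n m (a : 'I_n.+1 -> Z3) f (idx : seq nat) : size idx = m.+1 -> val_vec a f ->
  val_vec (fun j : 'I_m.+1 => a (inord (nth 0%N idx j))) (nvec [seq f (inord i) | i <- idx]).
Proof. by move=> sz a_val j; rewrite /nvec (nth_map 0%N) ?sz. Qed.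

Lemma has_Z3_point_pattern n (a : 'I_n.+1 -> Z3) f (idx : seq nat) :
  (forall i, is_Z3 (a i)) -> val_vec a f -> uniq idx -> all (fun i => i <= n)%N idx ->
  [seq f (inord i) | i <- idx] \in val_patterns -> has_Z3_point a.
Proof.
move=> a_Z3 a_val uniq_idx le_idx; rewrite !inE => /orP[] /eqP pat.
  have sz : size idx = 3 by rewrite -(size_map (fun i => f (inord i))) pat.
  apply: (has_Z3_point_sub (inord_nth_inj sz uniq_idx le_idx)).
  by apply: has_Z3_point_001 => [j|]; rewrite -?pat; [exact: a_Z3 | exact: val_vec_sub].
have sz : size idx = 4 by rewrite -(size_map (fun i => f (inord i))) pat.
apply: (has_Z3_point_sub (inord_nth_inj sz uniq_idx le_idx)).
by apply: has_Z3_point_0000 => [j|]; rewrite -?pat; [exact: a_Z3 | exact: val_vec_sub].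
Qed.

Definition has_val_pattern (r : seq nat) : bool :=
  has (fun c => has (fun idx =>
         uniq idx && ([seq (nth 0 r i + c) %% 3 | i <- idx] \in val_patterns))
    (tuples (iota 0 5) 3 ++ tuples (iota 0 5) 4))%N (iota 0 3).

Lemma has_val_pattern5 : all has_val_pattern (tuples (iota 0 3) 5).
Proof. by vm_compute. Qed.

Lemma simv_mod3 n (e f : 'I_n.+1 -> nat) (p : 'S_n.+1) c :
  (forall i, f i = (e (p i) + c) %% 3)%N -> simv (fun i => (e i)%:Z) (fun i => (f i)%:Z).
Proof.
move=> fE; exists p, c%:Z, (fun i => - ((e (p i) + c) %/ 3)%N%:Z) => i.
by rewrite fE; have := divn_eq (e (p i) + c) 3; lia.
Qed.

Lemma residues3_tuple n (e : 'I_n.+1 -> nat) k : (k <= n.+1)%N ->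
  [seq (e (inord i) %% 3)%N | i <- iota 0 k] \in tuples (iota 0 3) k.
Proof.
rewrite mem_tuples size_map size_iota eqxx => _; apply/allP => _ /mapP[i _ ->].
by rewrite inE mem_iota ltn_mod.
Qed.

Lemma has_Z3_point_ge5 n (a : 'I_n.+1 -> Z3) e : (4 <= n)%N ->
  (forall i, is_Z3 (a i)) -> val_vec a e -> has_Z3_point a.
Proof.
move=> n_ge4 a_Z3 a_val; pose r := [seq (e (inord i) %% 3)%N | i <- iota 0 5].
have r_in : r \in tuples (iota 0 3) 5 by apply: residues3_tuple.
have /hasP[c _ /hasP[idx idx_in /andP[uniq_idx pat]]] := allP has_val_pattern5 _ r_in.
have idx_lt5 : all (fun i => i < 5)%N idx.
  apply/allP => i i_in; move: idx_in; rewrite mem_cat !mem_tuples.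
  by case/orP => /andP[_ /allP/(_ i i_in)]; rewrite inE mem_iota.
have fE i : ((e i + c) %% 3 = (e ((1%g : 'S_n.+1) i) + c) %% 3)%N by rewrite perm1.
have [b [b_Z3 b_val ba _]] := simv_normalize a_Z3 a_val (simv_mod3 fE).
apply: (has_Z3_point_simeq a_Z3 ba); apply: (has_Z3_point_pattern b_Z3 b_val uniq_idx).
  by apply/allP => i /(allP idx_lt5) i_lt5; rewrite -ltnS (leq_trans i_lt5).
apply: etrans pat; congr (_ \in val_patterns); apply/eq_in_map => i /(allP idx_lt5) i_lt5.
by rewrite (nth_map 0%N) ?size_iota // nth_iota // modnDml.
Qed.

Definition val_targets : seq (seq nat) :=
  [:: [:: 0; 0; 0; 0]; [:: 0; 0; 0; 1]; [:: 0; 0; 1; 1]; [:: 0; 0; 1; 2]; [:: 0; 0; 0; 2]]%N.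

Definition has_val_target (r : seq nat) : bool :=
  has (fun l => has (fun c => perm_eq l [seq (x + c) %% 3 | x <- r])%N (iota 0 3)) val_targets.

Lemma has_val_target4 : all has_val_target (tuples (iota 0 3) 4).
Proof. by vm_compute. Qed.

Lemma val_class4 (e : 'I_4 -> nat) :
  exists2 l, l \in val_targets & simv (fun i => (e i)%:Z) (fun i => (vec4 l i)%:Z).
Proof.
have /hasP[l l_in /hasP[c _ perm_l]] := allP has_val_target4 _ (residues3_tuple e (leqnn 4)).
exists l => //; pose t := [tuple (e i + c) %% 3 | i < 4]%N.
have /tuple_permP[p lE] : perm_eq l t.
  have -> : val t = [seq ((e i + c) %% 3)%N | i <- enum 'I_4] by [].
  rewrite (perm_trans perm_l) // -val_enum_ord -!map_comp.
  rewrite (@eq_map _ _ _ (fun i => (e i + c) %% 3)%N) ?perm_refl // => i /=.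
  by rewrite inord_val modnDml.
apply: (simv_mod3 (p := p) (c := c)) => i.
by rewrite /vec4 lE -tnth_nth !tnth_mktuple.
Qed.

Lemma val_vec_exists n (a : 'I_n.+1 -> Z3) :
  ~ eqZ3 (fun k => \prod_i a i k) Z3zero -> exists e, val_vec a e.
Proof.
move=> prod_neq0; apply: (@fin_all_exists _ (fun=> nat) (fun i => valZ3 (a i))) => i.
apply: val_exists => /eqZ3_0P ai0.
by apply: prod_neq0; apply/eqZ3_0P => k; rewrite (bigD1 i) //=; apply/dvdz_mulr/ai0.
Qed.

Lemma val_sim4_normalize (a : 'I_4 -> Z3) l : (forall i, is_Z3 (a i)) -> val_sim4 a l ->
  exists b, [/\ forall i, is_Z3 (b i), val_vec b (vec4 l), simeq b a & simeq a b].
Proof. by move=> a_Z3 [e [a_val sim]]; apply: simv_normalize sim. Qed.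

Lemma val_sim4_class (a : 'I_4 -> Z3) :
  (exists e, val_vec a e) -> exists2 l, l \in val_targets & val_sim4 a l.
Proof. by case=> e a_val; have [l l_in sim] := val_class4 e; exists l => //; exists e. Qed.

Lemma has_Z3_point_val_sim4 (a : 'I_4 -> Z3) : (forall i, is_Z3 (a i)) ->
  val_sim4 a [:: 0; 0; 0; 0]%N \/ val_sim4 a [:: 0; 0; 0; 1]%N \/
  val_sim4 a [:: 0; 0; 1; 1]%N \/ val_sim4 a [:: 0; 0; 1; 2]%N -> has_Z3_point a.
Proof.
move=> a_Z3; have point l idx : uniq idx -> all (fun i => i <= 3)%N idx ->
    [seq nth 0%N l i | i <- idx] \in val_patterns -> val_sim4 a l -> has_Z3_point a.
  move=> uniq_idx le_idx pat /(val_sim4_normalize a_Z3)[b [b_Z3 b_val ba _]].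
  apply: (has_Z3_point_simeq a_Z3 ba); apply: (has_Z3_point_pattern b_Z3 b_val uniq_idx le_idx).
  apply: etrans pat; congr (_ \in val_patterns); apply/eq_in_map => i /(allP le_idx) le_i3.
  by rewrite /vec4 inordK.
case=> [|[|[]]]; [apply: (point _ [:: 0; 1; 2; 3]%N) | apply: (point _ [:: 0; 1; 3]%N)
  | apply: (point _ [:: 0; 1; 2]%N) | apply: (point _ [:: 0; 1; 2]%N)]; by [].
Qed.

Theorem proposition3p6 :
  (forall a : 'I_4 -> Z3,
     (forall i, is_Z3 (a i)) ->
     ~ eqZ3 (fun k => \prod_(i < 4) a i k) Z3zero ->
     (has_Q3_point a <->
        (val_sim4 a [:: 0; 0; 0; 0]%N \/ val_sim4 a [:: 0; 0; 0; 1]%N \/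
         val_sim4 a [:: 0; 0; 1; 1]%N \/ val_sim4 a [:: 0; 0; 1; 2]%N) \/
        (val_sim4 a [:: 0; 0; 0; 2]%N /\
         exists b : 'I_4 -> Z3,
           (forall i, is_Z3 (b i)) /\ simeq b a /\
           val_vec b (vec4 [:: 0; 0; 0; 2]%N) /\ ~ residues_full b)))
  /\
  (forall (n : nat) (a : 'I_n.+1 -> Z3),
     (4 <= n)%N ->
     (forall i, is_Z3 (a i)) ->
     ~ eqZ3 (fun k => \prod_(i < n.+1) a i k) Z3zero ->
     has_Q3_point a).
Proof.
split=> [a a_Z3 /val_vec_exists a_val | n a n_ge4 a_Z3 /val_vec_exists[e a_val]]; last first.
  by rewrite has_Q3_pointE; exact: has_Z3_point_ge5 a_val.
rewrite has_Q3_pointE; split=> [a_pt | [small | [_ [b [b_Z3 [ba [b_val not_full]]]]]]].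
- have [l] := val_sim4_class a_val; rewrite !inE => /or4P[| | | /orP[]] /eqP-> sim.
  + by left; left.
  + by left; right; left.
  + by left; do 2 right; left.
  + by left; do 3 right.
  have [b [b_Z3 b_val ba ab]] := val_sim4_normalize a_Z3 sim.
  right; split=> //; exists b; split=> //; split=> //; split=> // /residues_fullE full.
  exact: no_Z3_point_0002 b_Z3 b_val full (has_Z3_point_simeq b_Z3 ab a_pt).
- exact: has_Z3_point_val_sim4.
- apply: (has_Z3_point_simeq a_Z3 ba); apply: has_Z3_point_0002 b_Z3 b_val _.
  by apply/negP => /residues_fullE.
Qed.
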